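(* (1) The normalized $k$-derivations $D$ of $kQ$ (those with $D(e_i)=0$ for $i=1,2,3$) are exactly the derivations with $D(\alpha)=\alpha\,a(\beta)$, $D(\beta)=b(\beta)$, $D(\gamma)=h(\beta)\gamma$ for arbitrary polynomials $a,b,h\in k[\beta]$. (2) Such a $D$ satisfies $D(I)\subseteq I$ for $I=I(n;n',n'';V)$ (i.e. descends to a derivation of $\Lambda=kQ/I$) if and only if $\delta\, b(0)=0$ in $k$ and the first order differential operator $\Theta_D=(a(\beta)+h(\beta))+b(\beta)\frac{d}{d\beta}$ on $k[\beta]$ satisfies $\Theta_D(V)\subseteq V$. (3) If $D$ descends to $\Lambda$, the induced derivation of $\Lambda$ is inner if and only if $a(\beta)+h(\beta)\equiv a(0)+h(0)\pmod{\beta^{m}}$ and $b(\beta)\equiv 0\pmod{\beta^n}$, where $m=\min(n',n'')$.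
   Context: $k$ is a field; $Q$ is the quiver with vertices $1,2,3$ and arrows $\alpha\colon 2\to1$, $\beta\colon 2\to 2$, $\gamma\colon 3\to 2$; $kQ$ is generated by pairwise orthogonal idempotents $e_1,e_2,e_3$ (sum $1$) and $\alpha,\beta,\gamma$ with $e_1\alpha=\alpha=\alpha e_2$, $e_2\beta=\beta=\beta e_2$, $e_3\gamma=\gamma=\gamma e_2$, $\gamma\alpha=\beta\alpha=\gamma\beta=0$; for $p=\sum_ip_i\beta^i\in k[\beta]$ write $\alpha p=\sum_i p_i\alpha\beta^i$, $p\gamma=\sum_i p_i\beta^i\gamma$, $\alpha p\gamma=\sum_ip_i\alpha\beta^i\gamma$, and $p=\sum_i p_i\beta^i$ with $\beta^0=e_2$ inside $kQ$. For integers $n\ge 2$, $1\le n',n''\le n$, $m=\min(n',n'')$ and a $k$-subspace $V\subseteq k[\beta]$ containing $(\beta^m)$, $I(n;n',n'';V)$ denotes the two-sided ideal of $kQ$ generated by $\alpha\beta^{n'}$, $\beta^n$, $\beta^{n''}\gamma$ and all $\alpha v\gamma$, $v\in V$. Put $\delta=\gcd(n,n',n'')$ (an integer, viewed in $k$). *)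

From HB Require Import structures.
From mathcomp Require Import all_boot all_order all_algebra.
Set Implicit Arguments. Unset Strict Implicit. Unset Printing Implicit Defensive.
Import Order.TTheory GRing.Theory Num.Theory.
Local Open Scope ring_scope.

(* The path algebra kQ of the quiver 1 <-alpha- 2 (loop beta at 2) <-gamma- 3,
   given concretely by its path basis: an element
     KQ c1 c3 p2 pa pg pag
   stands for
     c1 e1 + c3 e3 + p2(beta) + alpha pa(beta) + pg(beta) gamma
       + alpha pag(beta) gamma,
   with the convention beta^0 = e2.  The basis of kQ consists of the paths
   e1, e3, beta^i (i>=0, beta^0 = e2), alpha beta^i, beta^i gamma,
   alpha beta^i gamma, so this is exactly kQ as a k-vector space. *)
Record kQ (k : fieldType) := KQ {
  c1 : k; c3 : k;
  p2 : {poly k}; pa : {poly k}; pg : {poly k}; pag : {poly k} }.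

Section KQops.
Variable k : fieldType.
Implicit Types x y : kQ k.

Definition kQzero : kQ k := KQ 0 0 0 0 0 0.
Definition kQadd x y : kQ k :=
  KQ (c1 x + c1 y) (c3 x + c3 y) (p2 x + p2 y) (pa x + pa y)
     (pg x + pg y) (pag x + pag y).
Definition kQopp x : kQ k :=
  KQ (- c1 x) (- c3 x) (- p2 x) (- pa x) (- pg x) (- pag x).
Definition kQscale (c : k) x : kQ k :=
  KQ (c * c1 x) (c * c3 x) (c *: p2 x) (c *: pa x) (c *: pg x) (c *: pag x).
(* Concatenation of paths (composition written right-to-left as in the
   paper: alpha = e1 alpha e2, gamma = e2 gamma e3). *)
Definition kQmul x y : kQ k :=
  KQ (c1 x * c1 y) (c3 x * c3 y) (p2 x * p2 y)
     (c1 x *: pa y + pa x * p2 y)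
     (p2 x * pg y + c3 y *: pg x)
     (c1 x *: pag y + pa x * pg y + c3 y *: pag x).
Definition kQsub x y := kQadd x (kQopp y).

Definition e1 : kQ k := KQ 1 0 0 0 0 0.
Definition e2 : kQ k := KQ 0 0 1 0 0 0.
Definition e3 : kQ k := KQ 0 1 0 0 0 0.
Definition alpha : kQ k := KQ 0 0 0 1 0 0.
Definition beta : kQ k := KQ 0 0 'X 0 0 0.
Definition gamma : kQ k := KQ 0 0 0 0 1 0.
Definition polyb (p : {poly k}) : kQ k := KQ 0 0 p 0 0 0.

Definition is_derivation (D : kQ k -> kQ k) : Prop :=
  (forall x y, D (kQadd x y) = kQadd (D x) (D y)) /\
  (forall c x, D (kQscale c x) = kQscale c (D x)) /\
  (forall x y, D (kQmul x y) = kQadd (kQmul (D x) y) (kQmul x (D y))).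

Definition normalized (D : kQ k -> kQ k) : Prop :=
  D e1 = kQzero /\ D e2 = kQzero /\ D e3 = kQzero.

Definition kQsum (n : nat) (f : nat -> kQ k) : kQ k :=
  foldr (fun i acc => kQadd (f i) acc) kQzero (iota 0 n).

Definition in_gen_ideal (G : kQ k -> Prop) (z : kQ k) : Prop :=
  exists (N : nat) (u g w : nat -> kQ k),
    (forall i, (i < N)%N -> G (g i)) /\
    z = kQsum N (fun i => kQmul (kQmul (u i) (g i)) (w i)).

Definition I_gens (n n' n'' : nat) (V : {poly k} -> Prop) (g : kQ k) : Prop :=
  g = kQmul alpha (polyb ('X^n')) \/
  g = polyb ('X^n) \/
  g = kQmul (polyb ('X^n'')) gamma \/
  exists v, V v /\ g = kQmul (kQmul alpha (polyb v)) gamma.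

Definition in_I n n' n'' V := in_gen_ideal (I_gens n n' n'' V).

Definition preserves_I n n' n'' V (D : kQ k -> kQ k) : Prop :=
  forall x, in_I n n' n'' V x -> in_I n n' n'' V (D x).

Definition induced_inner n n' n'' V (D : kQ k -> kQ k) : Prop :=
  exists z : kQ k, forall x,
    in_I n n' n'' V (kQsub (D x) (kQsub (kQmul z x) (kQmul x z))).

Definition Theta (a b h : {poly k}) (v : {poly k}) : {poly k} :=
  (a + h) * v + b * v^`().

Definition is_subspace (V : {poly k} -> Prop) : Prop :=
  V 0 /\ (forall (c : k) u v, V u -> V v -> V (c *: u + v)).

End KQops.
Arguments kQzero {k}. Arguments e1 {k}. Arguments e2 {k}. Arguments e3 {k}.
Arguments alpha {k}. Arguments beta {k}. Arguments gamma {k}.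

From HB Require Import structures.
From mathcomp Require Import all_boot all_order all_algebra.
From mathcomp Require Import ring.
Import GRing.Theory.
Local Open Scope ring_scope.
Set Implicit Arguments. Unset Strict Implicit.

(* In the path basis e1, e3, beta^i, alpha beta^i, beta^i gamma, alpha beta^i gamma,
   a normalized derivation with data (a, b, h) acts on the four polynomial
   coordinates by the first order operators b d, a + b d, h + b d and
   Theta_D = (a + h) + b d (with d = d/dbeta), and I consists exactly of the
   elements with vanishing vertex coordinates, polynomial coordinates divisible
   by beta^n, beta^n', beta^n'' and alpha-gamma coordinate in V.  So D(I) <= I
   reduces to Theta_D(V) <= V together with beta^m | b (beta^m q)' for
   m = n, n', n'', i.e. m b(0) = 0, and these three combine into one gcd
   condition by Bezout.  For (3), D - [z, -] maps kQ into I iff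
   beta^n | b, beta^n' | a - c1 + p and beta^n'' | h - p + c3, where c1, c3, p
   are the e1, e3, k[beta] coordinates of z; adding the last two and
   evaluating at 0 gives the stated criterion. *)

Lemma natr_gcdn_mul_eq0 (R : pzRingType) (r : R) (m l : nat) :
  (gcdn m l)%:R * r = 0 <-> m%:R * r = 0 /\ l%:R * r = 0.
Proof.
have dvd_eq0 d e : (d %| e)%N -> d%:R * r = 0 -> e%:R * r = 0.
  by move=> /dvdnP[c ->] dr; rewrite natrM -mulrA dr mulr0.
split=> [gr | [mr lr]]; first by split; apply: dvd_eq0 gr; rewrite ?dvdn_gcdl ?dvdn_gcdr.
case: (posnP m) => [-> | m_gt0]; first by rewrite gcd0n.
have [u _ /dvdnP[v Bezout]] := Bezoutl l m_gt0.
rewrite -[LHS]addr0 -[X in _ + X](mulr0 u%:R) -lr mulrA -natrM -mulrDl -natrD.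
by rewrite Bezout natrM -mulrA mr mulr0.
Qed.

Section Polynomials.
Variable k : fieldType.
Implicit Types b p q s : {poly k}.

Lemma dvdp_X_horner0 p : ('X %| p) = (p.[0] == 0).
Proof. by rewrite -[X in X %| _]subr0 -polyC0 dvdp_XsubCl rootE. Qed.

Lemma dvdp_Xn_horner0 m p : (0 < m)%N -> 'X^m %| p -> p.[0] = 0.
Proof.
move=> m_gt0 /(dvdp_trans (dvdp_exp2l 'X m_gt0)).
by rewrite expr1 dvdp_X_horner0 => /eqP.
Qed.

Lemma dvdp_Xn_mul_derivXn m b : (0 < m)%N ->
  ('X^m %| b * ('X^m)^`()) = (m%:R * b.[0] == 0).
Proof.
case: m => // m _; rewrite derivXn mulrnAr -mulrnAl /= exprSr.
rewrite [_ * 'X^m]mulrC dvdp_mul2l ?expf_neq0 ?polyX_eq0 // dvdp_X_horner0.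
by rewrite hornerMn mulr_natl.
Qed.

Lemma dvdp_Xn_mul_deriv m b q : m%:R * b.[0] = 0 -> 'X^m %| b * (q * 'X^m)^`().
Proof.
case: m => [|m] mb0; first by rewrite expr0 dvd1p.
rewrite derivM mulrDr mulrA dvdp_addr ?dvdp_mulIr //.
by rewrite mulrCA dvdp_mull // dvdp_Xn_mul_derivXn // mb0.
Qed.

Lemma dvdp_exp_minn_split (d s : {poly k}) (i j : nat) :
  d ^+ minn i j %| s -> exists q, d ^+ i %| s - q /\ d ^+ j %| q.
Proof.
case: (leqP j i) => _ dvd_s.
  by exists s; rewrite subrr dvdp0.
by exists 0; rewrite subr0 dvdp0.
Qed.

End Polynomials.

Lemma kQ_ext (k : fieldType) (x y : kQ k) : c1 x = c1 y -> c3 x = c3 y ->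
  p2 x = p2 y -> pa x = pa y -> pg x = pg y -> pag x = pag y -> x = y.
Proof. by case: x; case: y => /= ? ? ? ? ? ? ? ? ? ? ? ? -> -> -> -> -> ->. Qed.

Ltac kQ_ring := apply: kQ_ext => /=; rewrite -?mul_polyC; ring.

Section PathAlgebra.
Variable k : fieldType.
Implicit Types (x y z u w : kQ k) (a b h p q : {poly k}) (D : kQ k -> kQ k).

Definition kQcomm z x : kQ k := kQsub (kQmul z x) (kQmul x z).

Lemma deriv1 : (1 : {poly k})^`() = 0.
Proof. by rewrite -polyC1 derivC. Qed.

Definition kQder a b h x : kQ k :=
  KQ 0 0 (b * (p2 x)^`()) (a * pa x + b * (pa x)^`())
     (h * pg x + b * (pg x)^`()) (Theta a b h (pag x)).

Lemma kQder_sub_commE a b h z x :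
  kQsub (kQder a b h x) (kQcomm z x) =
  KQ 0 0 (b * (p2 x)^`())
   ((a - (c1 z)%:P + p2 z) * pa x + b * (pa x)^`() - pa z * p2 x + c1 x *: pa z)
   ((h - p2 z + (c3 z)%:P) * pg x + b * (pg x)^`() - c3 x *: pg z + p2 x * pg z)
   ((a + h - (c1 z - c3 z)%:P) * pag x + b * (pag x)^`() - pa z * pg x + pa x * pg z
      - c3 x *: pag z + c1 x *: pag z).
Proof. by rewrite /kQcomm /kQder /Theta; kQ_ring. Qed.

Lemma kQder_derivation a b h : is_derivation (kQder a b h).
Proof. by split; [|split] => *; rewrite /kQder /Theta /= !derivE; kQ_ring. Qed.

Lemma kQder_normalized a b h : normalized (kQder a b h).
Proof. by split; [|split]; rewrite /kQder /Theta /= ?deriv0 ?deriv1; kQ_ring. Qed.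

Lemma kQder_alpha a b h : kQder a b h alpha = kQmul alpha (polyb a).
Proof. by rewrite /kQder /Theta /= deriv0 deriv1; kQ_ring. Qed.

Lemma kQder_beta a b h : kQder a b h beta = polyb b.
Proof. by rewrite /kQder /Theta /= deriv0 derivX; kQ_ring. Qed.

Lemma kQder_gamma a b h : kQder a b h gamma = kQmul (polyb h) gamma.
Proof. by rewrite /kQder /Theta /= deriv0 deriv1; kQ_ring. Qed.

Section Derivation.
Variable D : kQ k -> kQ k.
Hypothesis D_derivation : is_derivation D.

Lemma derivation0 : D kQzero = kQzero.
Proof.
have [_ [DZ _]] := D_derivation.
by rewrite (_ : kQzero = kQscale 0 kQzero) ?DZ; kQ_ring.
Qed.

Lemma derivation_sandwich u w y : D u = kQzero -> D w = kQzero ->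
  kQmul (kQmul u y) w = y -> D y = kQmul (kQmul u (D y)) w.
Proof.
have [_ [_ DM]] := D_derivation => Du Dw uyw.
by rewrite -{1}uyw !DM Du Dw; kQ_ring.
Qed.

Lemma derivation_polyb b p : D e2 = kQzero -> D beta = polyb b ->
  D (polyb p) = polyb (b * p^`()).
Proof.
have [DD [DZ DM]] := D_derivation => De2 Dbeta.
elim/poly_ind: p => [|p c IHp].
  by rewrite (_ : polyb 0 = kQzero) ?derivation0; kQ_ring.
rewrite (_ : polyb _ = kQadd (kQmul (polyb p) beta) (kQscale c e2)); last kQ_ring.
by rewrite DD DM DZ IHp Dbeta De2 !derivE; kQ_ring.
Qed.

Lemma normalized_derivation_form : normalized D ->
  exists a b h, D alpha = kQmul alpha (polyb a) /\ D beta = polyb b /\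
                D gamma = kQmul (polyb h) gamma.
Proof.
case=> De1 [De2 De3].
exists (pa (D alpha)), (p2 (D beta)), (pg (D gamma)); split; [|split].
- by rewrite {1}(derivation_sandwich De1 De2 (_ : _ = alpha)); kQ_ring.
- by rewrite {1}(derivation_sandwich De2 De2 (_ : _ = beta)); kQ_ring.
- by rewrite {1}(derivation_sandwich De2 De3 (_ : _ = gamma)); kQ_ring.
Qed.

Lemma normalized_derivationE a b h : normalized D ->
  D alpha = kQmul alpha (polyb a) -> D beta = polyb b ->
  D gamma = kQmul (polyb h) gamma -> D =1 kQder a b h.
Proof.
have [DD [DZ DM]] := D_derivation => -[De1 [De2 De3]] Dalpha Dbeta Dgamma x.
rewrite {1}(_ : x = kQadd (kQscale (c1 x) e1) (kQadd (kQscale (c3 x) e3)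
  (kQadd (polyb (p2 x)) (kQadd (kQmul alpha (polyb (pa x)))
  (kQadd (kQmul (polyb (pg x)) gamma) (kQmul (kQmul alpha (polyb (pag x))) gamma)))))).
  rewrite !DD !DZ !DM De1 De3 Dalpha Dgamma !(derivation_polyb _ De2 Dbeta).
  by rewrite /kQder /Theta /=; kQ_ring.
by case: x => *; kQ_ring.
Qed.

End Derivation.

Section Ideal.
Variables (n n' n'' : nat) (V : {poly k} -> Prop).
Hypotheses (le_n'n : (n' <= n)%N) (le_n''n : (n'' <= n)%N).
Hypothesis V_subspace : is_subspace V.
Hypothesis V_Xm : forall p, V ('X^(minn n' n'') * p).

Lemma subspace0 : V 0.
Proof. by case: V_subspace. Qed.

Lemma subspaceD p q : V p -> V q -> V (p + q).
Proof. by case: V_subspace => _ VZD Vp Vq; have := VZD 1 p q Vp Vq; rewrite scale1r. Qed.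

Lemma subspaceZ c p : V p -> V (c *: p).
Proof. by case: V_subspace => V0 VZD Vp; have := VZD c p 0 Vp V0; rewrite addr0. Qed.

Lemma subspace_dvdp p : 'X^(minn n' n'') %| p -> V p.
Proof. by move=> /dvdpP[q ->]; rewrite mulrC. Qed.

Variant Iform x : Prop := IformI of
  c1 x = 0 & c3 x = 0 & 'X^n %| p2 x & 'X^n' %| pa x & 'X^n'' %| pg x & V (pag x).

Lemma IformKQ p q r v : 'X^n %| p -> 'X^n' %| q -> 'X^n'' %| r -> V v ->
  Iform (KQ 0 0 p q r v).
Proof. by move=> *; apply: IformI. Qed.

Lemma Iform0 : Iform kQzero.
Proof. exact: IformKQ (dvdp0 _) (dvdp0 _) (dvdp0 _) subspace0. Qed.

Lemma Iform_add x y : Iform x -> Iform y -> Iform (kQadd x y).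
Proof.
case=> x1 x3 x2 xa xg xag [y1 y3 y2 ya yg yag].
by apply: IformI; rewrite /= ?x1 ?y1 ?x3 ?y3 ?addr0 ?dvdp_add //; apply: subspaceD.
Qed.

Lemma Iform_mull y x : Iform x -> Iform (kQmul y x).
Proof.
case=> x1 x3 x2 xa xg xag; apply: IformI; rewrite /= ?x1 ?x3 ?mulr0 ?scale0r ?addr0 //.
- exact: dvdp_mull.
- apply: dvdp_add; first by rewrite -mul_polyC dvdp_mull.
  exact/dvdp_mull/(dvdp_trans (dvdp_exp2l _ le_n'n) x2).
- exact: dvdp_mull.
- apply: subspaceD; first exact: subspaceZ.
  exact/subspace_dvdp/dvdp_mull/(dvdp_trans (dvdp_exp2l _ (geq_minr _ _)) xg).
Qed.

Lemma Iform_mulr x y : Iform x -> Iform (kQmul x y).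
Proof.
case=> x1 x3 x2 xa xg xag; apply: IformI; rewrite /= ?x1 ?x3 ?mul0r ?scale0r ?add0r //.
- exact: dvdp_mulr.
- exact: dvdp_mulr.
- apply: dvdp_add; last by rewrite -mul_polyC dvdp_mull.
  exact/dvdp_mulr/(dvdp_trans (dvdp_exp2l _ le_n''n) x2).
- apply: subspaceD; last exact: subspaceZ.
  exact/subspace_dvdp/dvdp_mulr/(dvdp_trans (dvdp_exp2l _ (geq_minl _ _)) xa).
Qed.

Lemma Iform_kQsum N f : (forall i, (i < N)%N -> Iform (f i)) -> Iform (kQsum N f).
Proof.
move=> If; rewrite /kQsum.
have : forall i, i \in iota 0 N -> Iform (f i) by move=> i; rewrite mem_iota => /If.
elim: (iota 0 N) => [|i s IHs] Is /=; first exact: Iform0.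
apply: Iform_add; first by apply: Is; rewrite mem_head.
by apply: IHs => j sj; apply: Is; rewrite inE sj orbT.
Qed.

Lemma Iform_gens g : I_gens n n' n'' V g -> Iform g.
Proof.
case=> [->|[->|[->|[v [Vv ->]]]]]; apply: IformI;
  rewrite /= ?(mul0r, mulr0, scale0r, scale1r, mul1r, mulr1, addr0, add0r, dvdp0, dvdpp) //;
  exact: subspace0.
Qed.

Lemma in_IP x : in_I n n' n'' V x <-> Iform x.
Proof.
split=> [[N [u [g [w [Ig ->]]]]] | ].
  by apply: Iform_kQsum => i /Ig /Iform_gens /Iform_mull /Iform_mulr.
case=> x1 x3 /dvdpP[q2 x2] /dvdpP[qa xa] /dvdpP[qg xg] Vx.
exists 4, (nth kQzero [:: e2; e1; polyb qg; e1]),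
  (nth kQzero [:: polyb 'X^n; kQmul alpha (polyb 'X^n'); kQmul (polyb 'X^n'') gamma;
                  kQmul (kQmul alpha (polyb (pag x))) gamma]),
  (nth kQzero [:: polyb q2; polyb qa; e3; e3]); split.
  by case=> [|[|[|[|i]]]] // _; rewrite /I_gens /=; do ![by left | right]; exists (pag x).
move: x1 x3 x2 xa xg; case: x {Vx} => /= ? ? ? ? ? ? -> -> -> -> ->.
by rewrite /kQsum /=; kQ_ring.
Qed.

Lemma preserves_IP D a b h : (0 < n)%N -> (0 < n')%N -> (0 < n'')%N ->
  D =1 kQder a b h ->
  preserves_I n n' n'' V D <->
  (gcdn (gcdn n n') n'')%:R * b.[0] = 0 /\ (forall v, V v -> V (Theta a b h v)).
Proof.
move=> n_gt0 n'_gt0 n''_gt0 eqD; rewrite /preserves_I !natr_gcdn_mul_eq0.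
split=> [DI | [[[nb n'b] n''b] Theta_V] x /in_IP[_ _ x2 xa xg Vx]].
  have {}DI x : Iform x -> Iform (kQder a b h x).
    by move=> /in_IP/DI; rewrite eqD => /in_IP.
  have V0 := subspace0.
  have [_ _ /= dvd_n _ _ _] := DI _ (IformKQ (dvdpp _) (dvdp0 _) (dvdp0 _) V0).
  have [_ _ _ /= dvd_n' _ _] := DI _ (IformKQ (dvdp0 _) (dvdpp _) (dvdp0 _) V0).
  have [_ _ _ _ /= dvd_n'' _] := DI _ (IformKQ (dvdp0 _) (dvdp0 _) (dvdpp _) V0).
  rewrite dvdp_addr ?dvdp_mulIr // dvdp_Xn_mul_derivXn // in dvd_n'.
  rewrite dvdp_addr ?dvdp_mulIr // dvdp_Xn_mul_derivXn // in dvd_n''.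
  rewrite dvdp_Xn_mul_derivXn // in dvd_n.
  split; first by split; [split|]; apply/eqP.
  move=> v Vv.
  by have [_ _ _ _ _ /=] := DI _ (IformKQ (dvdp0 _) (dvdp0 _) (dvdp0 _) Vv).
move: x2 xa xg => /dvdpP[q2 x2] /dvdpP[qa xa] /dvdpP[qg xg].
rewrite eqD; apply/in_IP/IformI => //=.
- by rewrite x2 dvdp_Xn_mul_deriv.
- by rewrite xa dvdp_add ?dvdp_Xn_mul_deriv // dvdp_mull ?dvdp_mulIr.
- by rewrite xg dvdp_add ?dvdp_Xn_mul_deriv // dvdp_mull ?dvdp_mulIr.
- exact: Theta_V.
Qed.

Lemma inner_kQder_dvdp a b h z :
  (forall x, in_I n n' n'' V (kQsub (kQder a b h x) (kQcomm z x))) ->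
  [/\ 'X^n %| b, 'X^n' %| a - (c1 z)%:P + p2 z & 'X^n'' %| h - p2 z + (c3 z)%:P].
Proof.
move=> inner.
have /in_IP[_ _ + _ _ _] := inner beta; rewrite kQder_sub_commE /=.
have /in_IP[_ _ _ + _ _] := inner alpha; rewrite kQder_sub_commE /=.
have /in_IP[_ _ _ _ + _] := inner gamma; rewrite kQder_sub_commE /=.
by rewrite derivX deriv1 !(mulr1, mulr0, mul0r, scale0r, addr0, subr0).
Qed.

Lemma kQder_inner_polyb a b h (c : k) p :
  'X^n %| b -> 'X^n' %| a - c%:P + p -> 'X^n'' %| h - p ->
  forall x, in_I n n' n'' V (kQsub (kQder a b h x) (kQcomm (KQ c 0 p 0 0 0) x)).
Proof.
move=> dvd_b dvd_a dvd_h x; apply/in_IP; rewrite kQder_sub_commE /=.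
rewrite !(mul0r, mulr0, scale0r, scaler0, addr0, subr0).
apply: IformKQ.
- exact: dvdp_mulr.
- by rewrite dvdp_add ?dvdp_mulr // (dvdp_trans (dvdp_exp2l _ le_n'n) dvd_b).
- by rewrite dvdp_add ?dvdp_mulr // (dvdp_trans (dvdp_exp2l _ le_n''n) dvd_b).
have le_mn : (minn n' n'' <= n)%N by rewrite geq_min le_n'n.
apply/subspace_dvdp/dvdp_add/dvdp_mulr/(dvdp_trans (dvdp_exp2l _ le_mn) dvd_b).
rewrite (_ : a + h - c%:P = (a - c%:P + p) + (h - p)); last by ring.
apply/dvdp_mulr/dvdp_add.
  exact: dvdp_trans (dvdp_exp2l _ (geq_minl _ _)) dvd_a.
exact: dvdp_trans (dvdp_exp2l _ (geq_minr _ _)) dvd_h.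
Qed.

Lemma induced_innerP D a b h : (0 < n')%N -> (0 < n'')%N -> D =1 kQder a b h ->
  induced_inner n n' n'' V D <->
  'X^(minn n' n'') %| a + h - (a.[0] + h.[0])%:P /\ 'X^n %| b.
Proof.
move=> n'_gt0 n''_gt0 eqD; rewrite /induced_inner; split=> [[z inner] | [dvd_ah dvd_b]].
  have [|dvd_b dvd_a dvd_h] := @inner_kQder_dvdp a b h z; first by move=> x; rewrite -eqD.
  have {dvd_a dvd_h}dvd_ah : 'X^(minn n' n'') %| a + h - (c1 z - c3 z)%:P.
    rewrite (_ : a + h - _ = (a - (c1 z)%:P + p2 z) + (h - p2 z + (c3 z)%:P)); last first.
      by rewrite polyCB; ring.
    apply: dvdp_add; first exact: dvdp_trans (dvdp_exp2l _ (geq_minl _ _)) dvd_a.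
    exact: dvdp_trans (dvdp_exp2l _ (geq_minr _ _)) dvd_h.
  split=> //; suff <- : c1 z - c3 z = a.[0] + h.[0] by [].
  have m_gt0 : (0 < minn n' n'')%N by rewrite leq_min n'_gt0.
  have /eqP := dvdp_Xn_horner0 m_gt0 dvd_ah.
  by rewrite !hornerE subr_eq0 => /eqP.
(* Split a + h - (a(0) + h(0)) between the arrows alpha and gamma. *)
have [q [dvd_a dvd_h]] := dvdp_exp_minn_split dvd_ah.
exists (KQ (a.[0] + h.[0]) 0 (h - q) 0 0 0) => x; rewrite eqD.
by apply: kQder_inner_polyb; rewrite ?subKr // addrA (addrAC a).
Qed.

End Ideal.
End PathAlgebra.

Theorem mainTheorem5 (k : fieldType) :
  ( (forall D : kQ k -> kQ k, is_derivation D -> normalized D ->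
       exists a b h : {poly k},
         D alpha = kQmul alpha (polyb a) /\ D beta = polyb b /\
         D gamma = kQmul (polyb h) gamma) /\
    (forall a b h : {poly k}, exists D : kQ k -> kQ k,
       is_derivation D /\ normalized D /\
       D alpha = kQmul alpha (polyb a) /\ D beta = polyb b /\
       D gamma = kQmul (polyb h) gamma) ) /\
  (forall (n n' n'' : nat) (V : {poly k} -> Prop)
          (D : kQ k -> kQ k) (a b h : {poly k}),
     (2 <= n)%N -> (1 <= n' <= n)%N -> (1 <= n'' <= n)%N ->
     is_subspace V -> (forall p : {poly k}, V ('X^(minn n' n'') * p)) ->
     is_derivation D -> normalized D ->
     D alpha = kQmul alpha (polyb a) -> D beta = polyb b ->
     D gamma = kQmul (polyb h) gamma ->
     (preserves_I n n' n'' V D <->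
        ((gcdn (gcdn n n') n'')%:R * b.[0] = 0 /\
         (forall v, V v -> V (Theta a b h v)))) /\
     (preserves_I n n' n'' V D ->
        (induced_inner n n' n'' V D <->
           ('X^(minn n' n'') %| (a + h - (a.[0] + h.[0])%:P) /\
            'X^n %| b)))).
Proof.
split.
  split=> [D D_der D_norm | a b h]; first exact: normalized_derivation_form.
  exists (kQder a b h); split; first exact: kQder_derivation.
  split; first exact: kQder_normalized.
  by rewrite kQder_alpha kQder_beta kQder_gamma.
move=> n n' n'' V D a b h n_ge2 /andP[n'_gt0 le_n'n] /andP[n''_gt0 le_n''n]
  V_subspace V_Xm D_der D_norm Dalpha Dbeta Dgamma.
have eqD := normalized_derivationE D_der D_norm Dalpha Dbeta Dgamma.
split; first by apply: preserves_IP; rewrite // (ltnW n_ge2).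
by move=> _; apply: induced_innerP.
Qed.
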